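(* Let $G$ and $H$ be finite graphs such that $H$ fractionally edge-tiles $G$. Let $f(K)$ denote any one of the following for a graph $K$: (a) the number of acyclic orientations of $K$; (b) the number of forests in $K$ (spanning subgraphs without cycles, i.e. edge subsets containing no cycle); (c) the number of matchings in $K$. Then $$f(G)^{1/|E(G)|}\le f(H)^{1/|E(H)|}.$$
   Context: A copy of $H$ in $G$ is a subgraph isomorphic to $H$. $H$ fractionally edge-tiles $G$ means there is a finite list of copies of $H$ in $G$ such that every edge of $G$ belongs to the same number of copies in the list. A matching is a set of pairwise vertex-disjoint edges (the empty set counts). $E(K)$ is the edge set of $K$. *)

From mathcomp Require Import all_boot.
From mathcomp Require Import boolp.
From Stdlib Require Import Reals.

Set Implicit Arguments.
Unset Strict Implicit.
Unset Printing Implicit Defensive.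

Definition simple_graph (V : finType) (E : {set {set V}}) : Prop :=
  forall e, e \in E -> #|e| = 2.

(* The copy is the subgraph with vertex set
   phi @: VH and edge set copy_edges phi (it is isomorphic to H via phi). *)
Definition is_copy (VH VG : finType) (EH : {set {set VH}}) (EG : {set {set VG}})
  (phi : VH -> VG) : Prop :=
  injective phi /\ forall e, e \in EH -> phi @: e \in EG.

Definition copy_edges (VH VG : finType) (EH : {set {set VH}}) (phi : VH -> VG)
  : {set {set VG}} := [set (phi @: (e : {set VH})) | e in EH].

Definition frac_edge_tiles (VH VG : finType) (EH : {set {set VH}})
  (EG : {set {set VG}}) : Prop :=
  exists (l : seq (VH -> VG)) (k : nat),
    0 < k /\ (forall phi, List.In phi l -> is_copy EH EG phi) /\
    forall e, e \in EG -> count (fun phi => e \in copy_edges EH phi) l = k.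

Definition is_orientation (V : finType) (E : {set {set V}})
  (D : {ffun V * V -> bool}) : bool :=
  [forall x, forall y, D (x, y) ==> ([set x; y] \in E)] &&
  [forall x, forall y, ([set x; y] \in E) ==> (D (x, y) != D (y, x))].

Definition has_directed_cycle (V : finType) (D : {ffun V * V -> bool}) : Prop :=
  exists s : seq V, 0 < size s /\ uniq s /\ cycle (fun x y => D (x, y)) s.

Definition n_acyclic_orientations (V : finType) (E : {set {set V}}) : nat :=
  #|[set D : {ffun V * V -> bool} | is_orientation E D &&
                                   `[< ~ has_directed_cycle D >]]|.

Definition has_cycle (V : finType) (F : {set {set V}}) : Prop :=
  exists s : seq V, 3 <= size s /\ uniq s /\ cycle (fun x y => [set x; y] \in F) s.

Definition n_forests (V : finType) (E : {set {set V}}) : nat :=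
  #|[set F : {set {set V}} | (F \subset E) && `[< ~ has_cycle F >]]|.

Definition is_matching (V : finType) (E M : {set {set V}}) : bool :=
  (M \subset E) &&
  [forall e1 in M, forall e2 in M, (e1 != e2) ==> [disjoint e1 & e2]].

Definition n_matchings (V : finType) (E : {set {set V}}) : nat :=
  #|[set M : {set {set V}} | is_matching E M]|.

Definition root_ineq (f : forall V : finType, {set {set V}} -> nat)
  (VG VH : finType) (EG : {set {set VG}}) (EH : {set {set VH}}) : Prop :=
  (Rpower (INR (f VG EG)) (/ INR #|EG|) <= Rpower (INR (f VH EH)) (/ INR #|EH|))%R.

From Stdlib Require Import Reals.
From mathcomp Require Import all_boot all_order all_algebra ring lra boolp.

(* Shearer's lemma in counting form: if every point of Y lies in exactly k of
   the sets F_1, ..., F_r and S is a family of subsets of Y, then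
   |S|^k <= prod_j |{A :&: F_j | A in S}|.  By induction on |Y|: split S at a
   point x into the sets avoiding x and the sets containing x (with x removed);
   the induction step is the superadditivity of the geometric mean,
   prod a_i^(1/k) + prod b_i^(1/k) <= prod (a_i + b_i)^(1/k).

   If copies phi_1, ..., phi_r of H cover every edge of G exactly k times, then
   k |E(G)| = r |E(H)|.  Apply Shearer to the edge sets (for orientations, the
   arc sets) of the copies: the trace of a matching, forest or acyclic
   orientation of G on a copy pulls back injectively along phi_j to one of H.
   Hence f(G)^k <= f(H)^r, and taking (k |E(G)|)-th roots gives the claim. *)

Set Implicit Arguments.
Unset Strict Implicit.
Unset Printing Implicit Defensive.

Section RealRoots.
Local Open Scope R_scope.

Lemma INR_expn (a k : nat) : INR (a ^ k)%N = INR a ^ k.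
Proof. by elim: k => [|k IH] //; rewrite expnS mult_INR IH. Qed.

(* [ln] is [0] outside the positive reals. *)
Lemma Rpower0l (y : R) : Rpower 0 y = 1.
Proof.
by rewrite /Rpower /ln; case: Rlt_dec => [/Rlt_irrefl//|_]; rewrite Rmult_0_r exp_0.
Qed.

Lemma Rpower_ge1 (x y : R) : 1 <= x -> 0 <= y -> 1 <= Rpower x y.
Proof.
move=> x_ge1 y_ge0; have := Rle_Rpower_l 1 x y y_ge0 (conj Rlt_0_1 x_ge1).
by rewrite /Rpower ln_1 Rmult_0_r exp_0.
Qed.

Lemma Rpower_inv_expn (x : R) (k p : nat) : 0 < x -> (0 < k)%N ->
  Rpower x (/ INR p) = Rpower (x ^ k) (/ INR (k * p)).
Proof.
move=> x_gt0 k_gt0; rewrite -Rpower_pow // Rpower_mult mult_INR.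
have k_neq0 : INR k <> 0 by apply: not_0_INR; case: k k_gt0.
by rewrite Rinv_mult -Rmult_assoc Rinv_r // Rmult_1_l.
Qed.

Lemma Rpower_root_le (a b k L p q : nat) : (0 < k)%N -> (0 < p)%N ->
  (a ^ k <= b ^ L)%N -> (k * p = L * q)%N ->
  Rpower (INR a) (/ INR p) <= Rpower (INR b) (/ INR q).
Proof.
move=> k_gt0 p_gt0 le_ab e.
have /andP[L_gt0 q_gt0] : ((0 < L) && (0 < q))%N by rewrite -muln_gt0 -e muln_gt0 k_gt0.
have [a0|a_gt0] := posnP a.
  rewrite a0 Rpower0l; have [b0|b_gt0] := posnP b.
    by rewrite b0 Rpower0l; apply: Rle_refl.
  apply: Rpower_ge1; first by apply: (le_INR 1); apply/leP.
  by apply/Rlt_le/Rinv_0_lt_compat/lt_0_INR/ltP.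
have b_gt0 : (0 < b)%N.
  by case: b le_ab => //; rewrite exp0n // leqn0 expn_eq0 eqn0Ngt a_gt0.
have INR_gt0 n : (0 < n)%N -> 0 < INR n by move=> n_gt0; apply/lt_0_INR/ltP.
rewrite (Rpower_inv_expn p (INR_gt0 _ a_gt0) k_gt0).
rewrite (Rpower_inv_expn q (INR_gt0 _ b_gt0) L_gt0) e.
apply: Rle_Rpower_l; first by apply/Rlt_le/Rinv_0_lt_compat/INR_gt0; rewrite -e muln_gt0 k_gt0.
by rewrite -!INR_expn; split; [apply/INR_gt0; rewrite expn_gt0 a_gt0 | apply/le_INR/leP].
Qed.
End RealRoots.

Import Order.TTheory GRing.Theory Num.Theory.

Section GeometricMean.
Local Open Scope ring_scope.
Variable R : realFieldType.

Lemma exprD_le_convex (k : nat) (n m al T : R) :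
  0 <= n -> 0 <= m -> 0 <= al <= 1 ->
  n ^+ k <= al ^+ k * T -> m ^+ k <= (1 - al) ^+ k * T -> (n + m) ^+ k <= T.
Proof.
move=> n_ge0 m_ge0 /andP[al_ge0 al_le1].
have [->|k_gt0] := posnP k; first by rewrite !expr0 !mul1r.
wlog le_nm : n m al n_ge0 m_ge0 al_ge0 al_le1 / n * (1 - al) <= m * al.
  move=> wlog_le hn hm; have [le_nm|le_mn] := lerP (n * (1 - al)) (m * al).
    exact: (wlog_le n m al).
  rewrite addrC; apply: (wlog_le m n (1 - al)); rewrite ?subKr //; [lra | lra | exact: ltW].
have [al1|al_lt1] := eqVneq al 1.
  move=> hn; rewrite al1 subrr expr0n gtn_eqF // mul0r => hm.
  suff -> : m = 0 by rewrite addr0 -(mul1r T) -(expr1n _ k) -al1.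
  by apply/eqP; have := expf_eq0 m k; rewrite k_gt0 eq_le hm (exprn_ge0 _ m_ge0) /= => <-.
have coal_gt0 : 0 < 1 - al by rewrite subr_gt0 lt_neqAle al_lt1.
(* n / al <= m / (1 - al), hence n + m <= m / (1 - al). *)
move=> _ hm; rewrite -(ler_pM2l (exprn_gt0 k coal_gt0)) -exprMn.
apply: le_trans hm; rewrite mulrC lerXn2r ?nnegrE //; last lra.
exact: mulr_ge0 (addr_ge0 n_ge0 m_ge0) (ltW coal_gt0).
Qed.

Lemma geomean_superadditive (I : finType) (a b : I -> R) (n m C : R) :
  (forall i, 0 <= a i) -> (forall i, 0 <= b i) -> 0 <= C -> 0 <= n -> 0 <= m ->
  n ^+ #|I| <= (\prod_i a i) * C -> m ^+ #|I| <= (\prod_i b i) * C ->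
  (n + m) ^+ #|I| <= (\prod_i (a i + b i)) * C.
Proof.
move=> a_ge0 b_ge0 C_ge0 n_ge0 m_ge0 hn hm.
(* With the junk value [x / 0 = 0], both equations below also hold when a i + b i = 0. *)
pose u i := a i / (a i + b i).
have a_eq i : a i = u i * (a i + b i).
  have [s0|s_neq0] := eqVneq (a i + b i) 0; last by rewrite divfK.
  by rewrite s0 mulr0; move: s0; have := a_ge0 i; have := b_ge0 i; lra.
have b_eq i : b i = (1 - u i) * (a i + b i) by rewrite mulrBl mul1r -a_eq addrC addKr.
have u_ge0 i : 0 <= u i by rewrite divr_ge0 ?addr_ge0.
have u_le1 i : u i <= 1.
  have [s0|s_gt0] := eqVneq (a i + b i) 0; first by rewrite /u s0 invr0 mulr0 ler01.
  by rewrite /u ler_pdivrMr ?mul1r ?lerDl // lt_def s_gt0 addr_ge0.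
have coun_ge0 i : 0 <= 1 - u i by rewrite subr_ge0.
have [I0|I_gt0] := posnP #|I|.
  have no_index : (fun i : I => true) =1 xpred0 by exact: card0_eq I0.
  by move: hn; rewrite I0 !expr0 !big_pred0.
set al := (\sum_i u i) / #|I|%:R.
have cardR_gt0 : (0 : R) < #|I|%:R by rewrite ltr0n.
have [agm_u _] := leif_AGM (A := predT) (fun i _ => u_ge0 i).
have [agm_v _] := leif_AGM (A := predT) (E := fun i => 1 - u i) (fun i _ => coun_ge0 i).
have mean_v : (\sum_i (1 - u i)) / #|I|%:R = 1 - al.
  by rewrite sumrB sumr_const /al; field; rewrite gt_eqF.
have split_prod (x c : I -> R) : (forall i, x i = c i * (a i + b i)) ->
    \prod_i x i * C = \prod_i c i * (\prod_i (a i + b i) * C).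
  by move=> xc; rewrite (eq_bigr _ (fun i _ => xc i)) big_split mulrA.
have T_ge0 : 0 <= \prod_i (a i + b i) * C.
  by rewrite mulr_ge0 // prodr_ge0 // => i _; rewrite addr_ge0.
apply: (exprD_le_convex n_ge0 m_ge0 (al := al)).
- rewrite divr_ge0 ?sumr_ge0 //= ler_pdivrMr // mul1r -[X in _ <= X]mulr1n -sumr_const.
  by apply: ler_sum => i _.
- by apply: le_trans hn _; rewrite (split_prod _ _ a_eq) ler_wpM2r.
- by apply: le_trans hm _; rewrite (split_prod _ _ b_eq) -mean_v ler_wpM2r.
Qed.
End GeometricMean.

Lemma expnD_le_big_prod (T : Type) (Fs : seq T) (P : pred T) (a b c : T -> nat)
    (n m : nat) :
  (forall F, P F -> a F + b F <= c F) ->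
  (forall F, ~~ P F -> maxn (a F) (b F) <= c F) ->
  n ^ count P Fs <= \prod_(F <- Fs) a F -> m ^ count P Fs <= \prod_(F <- Fs) b F ->
  (n + m) ^ count P Fs <= \prod_(F <- Fs) c F.
Proof.
move=> le_abc le_max hn hm.
set t := in_tuple (filter P Fs).
have split_prod (f : T -> nat) : \prod_(F <- Fs) f F =
    \prod_(i < size (filter P Fs)) f (tnth t i) * \prod_(F <- Fs | ~~ P F) f F.
  by rewrite (bigID P) /= -big_filter big_tnth.
set C := \prod_(F <- Fs | ~~ P F) c F.
have le_C (f : T -> nat) : (forall F, ~~ P F -> f F <= c F) ->
    \prod_(F <- Fs | ~~ P F) f F <= C.
  by move=> le_fc; apply: leq_prod.
have P_t : forall i, P (tnth t i) by apply/all_tnthP; exact: filter_all.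
rewrite -size_filter -[size _]card_ord !split_prod in hn hm *.
apply: leq_trans (_ : \prod_i (a (tnth t i) + b (tnth t i)) * C <= _); last first.
  by rewrite leq_mul2r leq_prod ?orbT // => i _; apply: le_abc.
rewrite -(ler_nat rat) natrM natr_prod natrX natrD.
under eq_bigr do rewrite natrD.
apply: geomean_superadditive => //; rewrite -natrX -natr_prod -natrM ler_nat.
  apply: leq_trans hn _; rewrite leq_mul2l le_C ?orbT // => F /le_max.
  by rewrite geq_max => /andP[].
apply: leq_trans hm _; rewrite leq_mul2l le_C ?orbT // => F /le_max.
by rewrite geq_max => /andP[].
Qed.

Section Shearer.
Variable X : finType.
Implicit Types (S : {set {set X}}) (A F Y : {set X}) (x : X).

Definition trace S F : {set {set X}} := [set A :&: F | A in S].

Definition deletion S x : {set {set X}} := [set A in S | x \notin A].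

Definition link S x : {set {set X}} := [set A :\ x | A in [set A in S | x \in A]].

Lemma card_deletion_link S x : #|S| = #|deletion S x| + #|link S x|.
Proof.
have del_inj : {in [set A in S | x \in A] &, injective (fun A => A :\ x)}.
  by move=> A B /[!inE] /andP[_ xA] /andP[_ xB] eAB; rewrite -(setD1K xA) eAB setD1K.
rewrite card_in_imset //.
rewrite -(cardsID [set B : {set X} | x \in B] S) addnC; congr (_ + _); apply: eq_card => A.
  by rewrite !inE andbC.
by rewrite !inE andbC.
Qed.

Lemma mem_trace S F A : A \in S -> A :&: F \in trace S F.
Proof. exact: imset_f. Qed.

Lemma card_trace_gt0 S F : (0 < #|trace S F|) = (0 < #|S|).
Proof. by rewrite !card_gt0 imset_eq0. Qed.

Lemma card_trace_le (T : finType) S F (g : {set X} -> T) (R : {set T}) :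
  {in powerset F &, injective g} -> {in S, forall A, g (A :&: F) \in R} ->
  #|trace S F| <= #|R|.
Proof.
move=> g_inj gR.
have inj : {in trace S F &, injective g}.
  by apply: sub_in2 g_inj => _ /imsetP[A _ ->]; rewrite powersetE subsetIr.
rewrite -(card_in_imset inj); apply/subset_leq_card/subsetP.
by move=> _ /imsetP[_ /imsetP[A AS ->] ->]; exact: gR.
Qed.

Lemma trace_deletion S x F : trace (deletion S x) F \subset deletion (trace S F) x.
Proof.
apply/subsetP => _ /imsetP[A /[!inE] /andP[AS xA] ->].
by rewrite inE negb_and xA mem_trace.
Qed.

Lemma trace_link S x F : x \in F -> trace (link S x) F \subset link (trace S F) x.
Proof.
move=> xF; apply/subsetP => _ /imsetP[_ /imsetP[A /[!inE] /andP[AS xA] ->] ->].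
apply/imsetP; exists (A :&: F); last by rewrite setIDAC.
by rewrite inE [x \in _]inE xA xF mem_trace.
Qed.

Lemma trace_link_notin S x F : x \notin F -> trace (link S x) F \subset trace S F.
Proof.
move=> xF; apply/subsetP => _ /imsetP[_ /imsetP[A /[!inE] /andP[AS _] ->] ->].
suff -> : (A :\ x) :&: F = A :&: F by exact: mem_trace.
by apply/setP => y; rewrite !inE; case: eqP => [->|//]; rewrite (negPf xF) !andbF.
Qed.

Lemma shearer_card_le1 S (Fs : seq {set X}) k : 0 < k -> #|S| <= 1 ->
  #|S| ^ k <= \prod_(F <- Fs) #|trace S F|.
Proof.
move=> k_gt0 S_le1; have [->|S_gt0] := posnP #|S|; first by rewrite exp0n.
have -> : #|S| = 1 by apply/eqP; rewrite eqn_leq S_le1.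
by rewrite exp1n prodn_cond_gt0 // => F _; rewrite card_trace_gt0.
Qed.

Lemma shearer (Fs : seq {set X}) k Y S : 0 < k ->
  {in Y, forall x, count (fun F => x \in F) Fs = k} -> {in S, forall A, A \subset Y} ->
  #|S| ^ k <= \prod_(F <- Fs) #|trace S F|.
Proof.
move=> k_gt0; have [N] := ubnP #|Y|; elim: N Y S => // N IH Y S ltYN cover subY.
have [Y0|[x xY]] := set_0Vmem Y.
  apply: shearer_card_le1 => //; rewrite -(cards1 (set0 : {set X})).
  by apply/subset_leq_card/subsetP => A /subY; rewrite Y0 subset0 inE.
have ltY'N : #|Y :\ x| < N by rewrite (cardsD1 x Y) xY in ltYN.
have cover' : {in Y :\ x, forall y, count (fun F => y \in F) Fs = k}.
  by move=> y /setD1P[_ /cover].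
have sub_del : {in deletion S x, forall A, A \subset Y :\ x}.
  by move=> A /[!inE] /andP[/subY AY xA]; rewrite subsetD1 AY xA.
have sub_link : {in link S x, forall A, A \subset Y :\ x}.
  by move=> _ /imsetP[A /[!inE] /andP[/subY AY _] ->]; exact: setSD.
rewrite (card_deletion_link S x) -(cover x xY).
apply: expnD_le_big_prod; last 2 first.
1,2: by rewrite (cover x xY); apply: (IH (Y :\ x)).
- move=> F xF; rewrite (card_deletion_link (trace S F) x).
  by apply: leq_add; apply: subset_leq_card; [exact: trace_deletion | exact: trace_link].
- move=> F xF; rewrite geq_max !subset_leq_card ?trace_link_notin //.
  by apply/imsetS/subsetP => A /[!inE] /andP[].
Qed.
End Shearer.

Section RegularCover.
Variables (X : finType) (Y : {set X}) (Fs : seq {set X}) (k : nat).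
Implicit Types (S : {set {set X}}) (A F : {set X}).
Hypothesis cover : {in Y, forall x, count (fun F => x \in F) Fs = k}.

Lemma regular_cover_card m : {in Fs, forall F, F \subset Y /\ #|F| = m} ->
  k * #|Y| = size Fs * m.
Proof.
move=> uniform; rewrite mulnC -sum_nat_const.
transitivity (\sum_(x in Y) \sum_(F <- Fs) (x \in F : nat)).
  by apply: eq_bigr => x /cover <-; rewrite -sum1_count big_mkcond.
rewrite exchange_big /= big_seq (eq_bigr (fun _ => m)) -?big_seq.
  by rewrite big_const_seq count_predT iter_addn_0 mulnC.
move=> F /uniform[FY <-]; rewrite -big_mkcondr -sum1_card.
by apply: eq_bigl => x; rewrite andb_idl // => /(subsetP FY).
Qed.

Lemma regular_cover_expn_le S c : 0 < k ->
  {in S, forall A, A \subset Y} -> {in Fs, forall F, #|trace S F| <= c} ->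
  #|S| ^ k <= c ^ size Fs.
Proof.
move=> k_gt0 subY le_c; apply: leq_trans (shearer k_gt0 cover subY) _.
rewrite -iter_muln_1 -count_predT -big_const_seq big_seq [X in _ <= X]big_seq.
by apply: leq_prod.
Qed.
End RegularCover.

Lemma imset_set2 (T U : finType) (f : T -> U) (x y : T) : f @: [set x; y] = [set f x; f y].
Proof. by rewrite imsetU1 imset_set1. Qed.

Definition acyclic_orientations (V : finType) (E : {set {set V}}) :
  {set {ffun V * V -> bool}} :=
  [set D | is_orientation E D && `[< ~ has_directed_cycle D >]].

Definition is_forest (V : finType) (E F : {set {set V}}) : bool :=
  (F \subset E) && `[< ~ has_cycle F >].

Definition arcs (V : finType) (E : {set {set V}}) : {set V * V} :=
  [set p | [set p.1; p.2] \in E].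

Section Pullback.
Variables (VH VG : finType) (EH : {set {set VH}}) (phi : VH -> VG).
Hypothesis phi_inj : injective phi.

Definition pullback (B : {set {set VG}}) : {set {set VH}} := [set e in EH | phi @: e \in B].

Lemma card_copy_edges : #|copy_edges EH phi| = #|EH|.
Proof. exact/card_imset/imset_inj. Qed.

Lemma pullbackK :
  {in powerset (copy_edges EH phi), cancel pullback (fun C => copy_edges C phi)}.
Proof.
move=> B; rewrite powersetE => sBc; apply/setP => b; apply/imsetP/idP.
  by case=> e /[!inE] /andP[_ eB] ->.
by move=> bB; have /imsetP[e eH be] := subsetP sBc b bB; exists e; rewrite // inE eH -be.
Qed.

Lemma pullback_setI_copy B : pullback (B :&: copy_edges EH phi) = pullback B.
Proof. by apply/setP => e; rewrite !inE; case eH: (e \in EH); rewrite //= imset_f ?andbT. Qed.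

Lemma pullback_sub B : pullback B \subset EH.
Proof. by apply/subsetP => e /[!inE] /andP[]. Qed.

Lemma matching_pullback EG M : is_matching EG M -> is_matching EH (pullback M).
Proof.
case/andP=> _ /forall_inP disjM; rewrite /is_matching pullback_sub.
apply/forall_inP => e1 /[!inE] /andP[_ e1M]; apply/forall_inP => e2 /[!inE] /andP[_ e2M].
apply/implyP => ne12; have := forall_inP (disjM _ e1M) _ e2M.
rewrite (inj_eq (imset_inj phi_inj)) ne12 /= => /pred0P dis12.
apply/pred0P => v /=; apply/negbTE/negP => /andP[v1 v2].
by have := dis12 (phi v); rewrite /= !imset_f.
Qed.

Lemma forest_pullback EG F : is_forest EG F -> is_forest EH (pullback F).
Proof.
case/andP=> _ /asboolP noF; rewrite /is_forest pullback_sub; apply/asboolP.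
move=> [s [s_ge3 [s_uniq s_cycle]]]; apply: noF; exists (map phi s).
rewrite size_map map_inj_uniq // cycle_map; do 2!split=> //.
by apply: sub_cycle s_cycle => x y /[!inE] /andP[_]; rewrite imset_set2.
Qed.

Definition arc_pullback (B : {set VG * VG}) : {ffun VH * VH -> bool} :=
  [ffun q => (phi q.1, phi q.2) \in B].

Lemma mem_arcs_copy x y :
  ((phi x, phi y) \in arcs (copy_edges EH phi)) = ([set x; y] \in EH).
Proof. by rewrite inE /= -imset_set2 (mem_imset _ _ (imset_inj phi_inj)). Qed.

Lemma arcs_copyP p : p \in arcs (copy_edges EH phi) -> exists q, p = (phi q.1, phi q.2).
Proof.
case: p => u v; rewrite inE => /imsetP[e _ /= e_uv].
have /imsetP[a _ ->] : u \in phi @: e by rewrite -e_uv !inE eqxx.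
have /imsetP[b _ ->] : v \in phi @: e by rewrite -e_uv !inE eqxx orbT.
by exists (a, b).
Qed.

Lemma arc_pullback_inj :
  {in powerset (arcs (copy_edges EH phi)) &, injective arc_pullback}.
Proof.
move=> B1 B2 /[!powersetE] sB1 sB2 eB; apply/setP => p.
have [/arcs_copyP[q ->]|pF] := boolP (p \in arcs (copy_edges EH phi)).
  by have := congr1 (fun D : {ffun VH * VH -> bool} => D q) eB; rewrite !ffunE.
by rewrite (contraNF (subsetP sB1 p) pF) (contraNF (subsetP sB2 p) pF).
Qed.

Lemma arc_pullbackE (D : {ffun VG * VG -> bool}) x y :
  arc_pullback ([set p | D p] :&: arcs (copy_edges EH phi)) (x, y) =
  D (phi x, phi y) && ([set x; y] \in EH).
Proof. by rewrite ffunE inE [_ \in [set p | _]]inE mem_arcs_copy. Qed.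

Lemma acyclic_orientation_pullback (EG : {set {set VG}}) (D : {ffun VG * VG -> bool}) :
  {in EH, forall e : {set VH}, phi @: e \in EG} -> D \in acyclic_orientations EG ->
  arc_pullback ([set p | D p] :&: arcs (copy_edges EH phi)) \in acyclic_orientations EH.
Proof.
rewrite !in_set => hom /andP[/andP[_ /forallP antisym] /asboolP acyc].
apply/andP; split; first (apply/andP; split).
- by apply/forallP => x; apply/forallP => y; apply/implyP; rewrite arc_pullbackE => /andP[].
- apply/forallP => x; apply/forallP => y; apply/implyP => xyE.
  have yxE : [set y; x] \in EH by rewrite setUC.
  rewrite !arc_pullbackE xyE yxE !andbT.
  by have /forallP/(_ (phi y)) := antisym (phi x); rewrite -imset_set2 hom.
- apply/asboolP => -[s [s_gt0 [s_uniq s_cycle]]]; apply: acyc; exists (map phi s).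
  rewrite size_map map_inj_uniq // cycle_map; do 2!split=> //.
  by apply: sub_cycle s_cycle => x y; rewrite arc_pullbackE => /andP[].
Qed.

End Pullback.

Lemma mem_map_In (T : Type) (U : eqType) (f : T -> U) (l : seq T) u :
  u \in map f l -> exists2 t, List.In t l & u = f t.
Proof.
elim: l => //= t l IH; rewrite inE => /orP[/eqP->|/IH[t' t'l ->]].
  by exists t; first left.
by exists t'; first right.
Qed.

Lemma copy_edges_sub (VH VG : finType) (EH : {set {set VH}}) (EG : {set {set VG}}) phi :
  is_copy EH EG phi -> copy_edges EH phi \subset EG.
Proof. by case=> _ hom; apply/subsetP => _ /imsetP[e eH ->]; exact: hom. Qed.

Section Tiling.
Variables (VG VH : finType) (EG : {set {set VG}}) (EH : {set {set VH}}).
Variables (l : seq (VH -> VG)) (k : nat).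
Hypothesis copies : forall phi, List.In phi l -> is_copy EH EG phi.
Hypothesis cover : forall e, e \in EG -> count (fun phi => e \in copy_edges EH phi) l = k.

Lemma tiling_edge_cover :
  {in EG, forall e, count (fun F : {set {set VG}} => e \in F) (map (copy_edges EH) l) = k}.
Proof. by move=> e /cover <-; rewrite count_map. Qed.

Lemma tiling_card_edges : k * #|EG| = size l * #|EH|.
Proof.
rewrite -(size_map (copy_edges EH) l); apply: (regular_cover_card tiling_edge_cover).
move=> _ /mem_map_In[phi /copies phi_copy ->]; split; first exact: copy_edges_sub.
by case: phi_copy => phi_inj _; rewrite card_copy_edges.
Qed.

Hypothesis k_gt0 : 0 < k.

Lemma edge_family_tiling_le (P : pred {set {set VG}}) (Q : pred {set {set VH}}) :
  (forall A, P A -> A \subset EG) ->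
  (forall phi A, is_copy EH EG phi -> P A -> Q (pullback EH phi A)) ->
  #|[set A | P A]| ^ k <= #|[set B | Q B]| ^ size l.
Proof.
move=> PE PQ; rewrite -(size_map (copy_edges EH) l).
apply: (regular_cover_expn_le tiling_edge_cover k_gt0) => [A|_ /mem_map_In[phi phi_l ->]].
  by rewrite inE => /PE.
apply: card_trace_le (can_in_inj (@pullbackK _ _ EH phi)) _ => A /[!inE] PA.
by rewrite pullback_setI_copy; apply: PQ (copies phi_l) PA.
Qed.

Lemma acyclic_orientations_tiling_le :
  n_acyclic_orientations EG ^ k <= n_acyclic_orientations EH ^ size l.
Proof.
set S := [set [set p | D p] | D : {ffun VG * VG -> bool} in acyclic_orientations EG].
have -> : n_acyclic_orientations EG = #|S|.
  rewrite card_in_imset // => D1 D2 _ _ /setP eD.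
  by apply/ffunP => p; have := eD p; rewrite !inE.
rewrite -(size_map (fun phi => arcs (copy_edges EH phi)) l).
apply: (regular_cover_expn_le (Y := arcs EG) _ k_gt0).
- move=> p; rewrite inE => /cover <-; rewrite count_map.
  by apply: eq_count => phi; rewrite /= inE.
- move=> _ /imsetP[D /[!in_set] /andP[/andP[/forallP arcE _] _] ->].
  by apply/subsetP => -[x y]; rewrite !inE => Dxy; have /forallP/(_ y)/implyP := arcE x; apply.
- move=> _ /mem_map_In[phi phi_l ->]; have [phi_inj hom] := copies phi_l.
  apply: card_trace_le (@arc_pullback_inj _ _ EH phi) _ => _ /imsetP[D DE ->].
  by have := acyclic_orientation_pullback phi_inj hom DE; rewrite /acyclic_orientations.
Qed.

End Tiling.

Theorem proposition5p3 (VG VH : finType) (EG : {set {set VG}}) (EH : {set {set VH}}) :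
  simple_graph EG -> simple_graph EH ->
  EG != set0 ->
  frac_edge_tiles EH EG ->
  root_ineq n_acyclic_orientations EG EH /\
  root_ineq n_forests EG EH /\
  root_ineq n_matchings EG EH.
Proof.
move=> _ _ EG_neq0 [l [k [k_gt0 [copies cover]]]].
have root_le f : f VG EG ^ k <= f VH EH ^ size l -> root_ineq f EG EH.
  move=> le_f; apply: Rpower_root_le k_gt0 _ le_f (tiling_card_edges copies cover).
  by rewrite card_gt0.
split; [|split]; apply: root_le.
- exact: acyclic_orientations_tiling_le.
- apply: (edge_family_tiling_le copies cover k_gt0 (P := is_forest EG)).
    by move=> F /andP[].
  by move=> phi F [phi_inj _]; exact: forest_pullback.
- apply: (edge_family_tiling_le copies cover k_gt0 (P := is_matching EG)).
    by move=> M /andP[].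
  by move=> phi M [phi_inj _]; exact: matching_pullback.
Qed.
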